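(* Let $W$ be a binary MAC with 2 users, let $X[1],X[2]$ be i.i.d. uniform on $\mathbb{F}_2$ and let $Y$ be the output of $W$ on input $(X[1],X[2])$. Consider the triples $$I=\big(I(X[1];Y,X[2]),\,I(X[2];Y,X[1]),\,I(X[1],X[2];Y)\big),\qquad J=\big(I(X[1];Y),\,I(X[2];Y),\,I(X[1]+X[2];Y)\big).$$ If all entries of $I$ are integers, then all entries of $J$ lie in $\{0,1\}$ and $J$ is uniquely determined by $I$ (any two such MACs with the same integer triple $I$ have the same $J$). Conversely, if all entries of $J$ lie in $\{0,1\}$, then all entries of $I$ are integers and $I$ is uniquely determined by $J$.
   Context: A binary MAC with 2 users is a channel $W$ with input alphabet $\mathbb{F}_2^2$ and finite output alphabet. Mutual information is in bits; $X[1]+X[2]$ is addition in $\mathbb{F}_2$. *)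

From HB Require Import structures.
From mathcomp Require Import all_boot all_order all_algebra.
From mathcomp Require Import reals exp.
Set Implicit Arguments. Unset Strict Implicit. Unset Printing Implicit Defensive.
Import Order.TTheory GRing.Theory Num.Theory.
Local Open Scope ring_scope.

Section Info.
Variable R : realType.

Definition log2 (x : R) : R := ln x / ln 2.

Definition probOf (T A : finType) (p : T -> R) (f : T -> A) (a : A) : R :=
  \sum_(t : T | f t == a) p t.

Definition mutinfo (T A B : finType) (p : T -> R) (f : T -> A) (g : T -> B) : R :=
  \sum_(a : A) \sum_(b : B)
    let pab := probOf p (fun t => (f t, g t)) (a, b) in
    if pab == 0 then 0
    else pab * log2 (pab / (probOf p f a * probOf p g b)).

(* a binary MAC with 2 users: input alphabet F_2^2 (= bool * bool, with
   addition in F_2 being xor), finite output alphabet Y, transition W x1 x2 y *)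
Definition is_MAC (Y : finType) (W : bool -> bool -> Y -> R) : Prop :=
  (forall x1 x2 y, 0 <= W x1 x2 y) /\ (forall x1 x2, \sum_(y : Y) W x1 x2 y = 1).

(* joint pmf of (X[1], X[2], Y) with X[1], X[2] iid uniform on F_2 *)
Definition macP (Y : finType) (W : bool -> bool -> Y -> R) (t : bool * bool * Y) : R :=
  W t.1.1 t.1.2 t.2 / 4.

Definition rvX1 (Y : finType) (t : bool * bool * Y) : bool := t.1.1.
Definition rvX2 (Y : finType) (t : bool * bool * Y) : bool := t.1.2.
Definition rvY  (Y : finType) (t : bool * bool * Y) : Y := t.2.

Definition Itriple (Y : finType) (W : bool -> bool -> Y -> R) : R * R * R :=
  (mutinfo (macP W) (@rvX1 Y) (fun t => (rvY t, rvX2 t)),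
   mutinfo (macP W) (@rvX2 Y) (fun t => (rvY t, rvX1 t)),
   mutinfo (macP W) (fun t => (rvX1 t, rvX2 t)) (@rvY Y)).

Definition Jtriple (Y : finType) (W : bool -> bool -> Y -> R) : R * R * R :=
  (mutinfo (macP W) (@rvX1 Y) (@rvY Y),
   mutinfo (macP W) (@rvX2 Y) (@rvY Y),
   mutinfo (macP W) (fun t => addb (rvX1 t) (rvX2 t)) (@rvY Y)).

Definition isInt (x : R) : Prop := exists z : int, x = z%:~R.
Definition is01 (x : R) : Prop := x = 0 \/ x = 1.

Definition triple_all (P : R -> Prop) (v : R * R * R) : Prop :=
  [/\ P v.1.1, P v.1.2 & P v.2].

End Info.

From mathcomp Require Import all_boot all_order all_algebra.
From mathcomp Require Import reals exp.
From mathcomp Require Import ring lra.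
Import Order.TTheory GRing.Theory Num.Theory.
Set Implicit Arguments. Unset Strict Implicit. Unset Printing Implicit Defensive.
Local Open Scope ring_scope.

(* With X1, X2 uniform, each quantity in I and J is a sum over output letters
   of [bitinfo u v = (u + v) (1 - h (u / (u + v)))], h the binary entropy and
   u, v the weights of the two values of a uniform input bit.  As
   [0 <= bitinfo u v <= u + v], with equality on the left iff u = v and on the
   right iff u = 0 or v = 0, and the weights have total mass 1, every such
   quantity lies in [0, 1]; it is 0 iff the two weight families agree
   pointwise, and 1 iff they have disjoint supports.  These pointwise
   constraints on the four weights W x1 x2 y / 4 at each y relate the extreme
   values of the different quantities.  With the chain rule
   I3 = I1 + J2 = I2 + J1, an integral I gives J = (I3 - I2, I3 - I1, I1 I2),
   and a binary J gives I1 = J1 + (1 - J1) (1 - J2) J3. *)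

Section BitInfo.
Variable R : realType.
Implicit Types (t u v x y : R).

Definition xlog2 x := x * log2 x.

Definition bitinfo u v := u + v + xlog2 u + xlog2 v - xlog2 (u + v).

Lemma ln2_gt0 : 0 < ln (2 : R). Proof. by apply: ln_gt0; lra. Qed.

Lemma xlog20 : xlog2 0 = 0. Proof. by rewrite /xlog2 mul0r. Qed.

Lemma xlog2_half : xlog2 2^-1 = - 2^-1.
Proof. by rewrite /xlog2 /log2 lnV ?posrE //; field; rewrite gt_eqF ?ln2_gt0. Qed.

Lemma xlog2_quarter : xlog2 4^-1 = - 2^-1.
Proof.
rewrite /xlog2 /log2 lnV ?posrE // (_ : 4 = 2 * 2) ?lnM ?posrE //; last by ring.
by field; rewrite gt_eqF ?ln2_gt0.
Qed.

Lemma bitinfo0l v : bitinfo 0 v = v.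
Proof. by rewrite /bitinfo add0r xlog20; ring. Qed.

Lemma bitinfo0r u : bitinfo u 0 = u.
Proof. by rewrite /bitinfo addr0 xlog20; ring. Qed.

Lemma bitinfo_ln u v : bitinfo u v * ln 2 =
  u * (ln 2 + ln u - ln (u + v)) + v * (ln 2 + ln v - ln (u + v)).
Proof. by rewrite /bitinfo /xlog2 /log2; field; rewrite gt_eqF ?ln2_gt0. Qed.

Lemma ln_lt_subr1 t : 0 < t -> t != 1 -> ln t < t - 1.
Proof.
move=> t_gt0 t_neq1; have /expR_gt1Dx : ln t != 0 by rewrite ln_eq0.
by rewrite lnK ?posrE //; lra.
Qed.

Lemma mulr_lnB_le x y : 0 < x -> 0 < y -> x * (ln y - ln x) <= y - x ?= iff (x == y).
Proof.
move=> x_gt0 y_gt0; rewrite -ln_div ?posrE //.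
have x_neq0 : x != 0 by rewrite gt_eqF.
have -> : y - x = x * (y / x - 1) by field.
apply/leifP; have [<-|xy] := eqVneq x y; first by rewrite divff // ln1 subrr.
rewrite ltr_pM2l //; apply: ln_lt_subr1; first exact: divr_gt0.
by apply: contra_neq xy => /(congr1 ( *%R^~ x)); rewrite mulfVK // mul1r => ->.
Qed.

Lemma ln2M x : 0 < x -> ln (2 * x) = ln 2 + ln x.
Proof. by move=> x_gt0; rewrite lnM ?posrE. Qed.

Lemma bitinfo_ge0 u v : 0 <= u -> 0 <= v -> 0 <= bitinfo u v ?= iff (u == v).
Proof.
move=> u_ge0 v_ge0.
move: (u_ge0); rewrite le0r => /predU1P[->|u_gt0].
  by rewrite bitinfo0l; exact: leif_eq.
move: (v_ge0); rewrite le0r => /predU1P[->|v_gt0].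
  by rewrite bitinfo0r eq_sym; exact: leif_eq.
have s_gt0 : 0 < u + v by rewrite addr_gt0.
(* Gibbs' inequality at (2u, u + v) and (2v, u + v); the two instances add up
   to [- 2 ln 2 * bitinfo u v <= 0]. *)
have gap := leifD (mulr_lnB_le (mulr_gt0 (ltr0Sn R 1) u_gt0) s_gt0)
                  (mulr_lnB_le (mulr_gt0 (ltr0Sn R 1) v_gt0) s_gt0).
have c_lt0 : - (2 * ln 2) < 0 :> R by rewrite oppr_lt0 mulr_gt0 ?ln2_gt0.
rewrite -(nmono_leif (ler_nM2r c_lt0)) mul0r.
have -> : (u == v) = (2 * u == u + v) && (2 * v == u + v).
  by apply/eqP/andP => [->|[/eqP ? /eqP ?]]; [split; apply/eqP; ring | lra].
rewrite !ln2M // (_ : u + v - 2 * u + (u + v - 2 * v) = 0) in gap; last by ring.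
rewrite mulrN (_ : - (bitinfo u v * (2 * ln 2)) = 2 * u * (ln (u + v) - (ln 2 + ln u))
                 + 2 * v * (ln (u + v) - (ln 2 + ln v))) //.
by rewrite mulrCA bitinfo_ln; ring.
Qed.

Lemma bitinfo_le u v : 0 <= u -> 0 <= v -> bitinfo u v <= u + v ?= iff (u == 0) || (v == 0).
Proof.
rewrite le0r => /predU1P[->|u_gt0] v_ge0.
  by rewrite bitinfo0l add0r eqxx; apply/leif_refl.
move: v_ge0; rewrite le0r => /predU1P[->|v_gt0].
  by rewrite bitinfo0r addr0 eqxx orbT; apply/leif_refl.
have lt_u : 0 < ln (u + v) - ln u by rewrite subr_gt0 ltr_ln ?posrE ?addr_gt0 // ltrDl.
have lt_v : 0 < ln (u + v) - ln v by rewrite subr_gt0 ltr_ln ?posrE ?addr_gt0 // ltrDr.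
apply/leifP; rewrite (gt_eqF u_gt0) (gt_eqF v_gt0) /= -(ltr_pM2r ln2_gt0) bitinfo_ln.
have := mulr_gt0 u_gt0 lt_u; have := mulr_gt0 v_gt0 lt_v; lra.
Qed.

Lemma bitinfo_chain a b c d :
  bitinfo a c + bitinfo b d + bitinfo (a + c) (b + d) =
  bitinfo a b + bitinfo c d + bitinfo (a + b) (c + d).
Proof. by rewrite /bitinfo (_ : a + c + (b + d) = a + b + (c + d)); ring. Qed.

End BitInfo.

Section SumBitInfo.
Variables (R : realType) (T : finType) (u v : T -> R).
Hypotheses (u_ge0 : forall t, 0 <= u t) (v_ge0 : forall t, 0 <= v t).

Lemma sum_bitinfo_ge0 :
  0 <= \sum_t bitinfo (u t) (v t) ?= iff [forall t, u t == v t].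
Proof. by apply: leif_0_sum => t _; exact: bitinfo_ge0. Qed.

Lemma sum_bitinfo_le :
  \sum_t bitinfo (u t) (v t) <= \sum_t (u t + v t)
    ?= iff [forall t, (u t == 0) || (v t == 0)].
Proof. by apply: leif_sum => t _; exact: bitinfo_le. Qed.

Lemma sum_bitinfo_eq0P :
  reflect (forall t, u t = v t) (\sum_t bitinfo (u t) (v t) == 0).
Proof.
rewrite eq_sym; have [_ ->] := sum_bitinfo_ge0.
by apply: (iffP forallP) => h t; apply/eqP; exact: h.
Qed.

Hypothesis uv_mass : \sum_t (u t + v t) = 1.

Lemma sum_bitinfo_eq1P :
  reflect (forall t, u t = 0 \/ v t = 0) (\sum_t bitinfo (u t) (v t) == 1).
Proof.
rewrite -uv_mass; have [_ ->] := sum_bitinfo_le.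
apply: (iffP forallP) => h t; first by case/orP: (h t) => /eqP; auto.
by case: (h t) => ->; rewrite eqxx ?orbT.
Qed.

Lemma sum_bitinfo_int01 :
  isInt (\sum_t bitinfo (u t) (v t)) -> is01 (\sum_t bitinfo (u t) (v t)).
Proof.
have [ge0 _] := sum_bitinfo_ge0; have [+ _] := sum_bitinfo_le; rewrite uv_mass.
move=> le1 [z ez]; move: ge0 le1; rewrite ez ler0z lerz1 /is01.
by case: z {ez} => [[|[|n]]|n] //= _ _; [left | right].
Qed.

End SumBitInfo.

Section MutualInformation.
Variables (R : realType) (T : finType) (p : T -> R).
Hypothesis p_ge0 : forall t, 0 <= p t.

Lemma probOf_ge0 (A : finType) (f : T -> A) a : 0 <= probOf p f a.
Proof. exact: sumr_ge0. Qed.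

Lemma probOf_inj (A : finType) (h : T -> A) t : injective h -> probOf p h (h t) = p t.
Proof. by move=> h_inj; apply: big_pred1 => s; exact: inj_eq. Qed.

Lemma sum_probOf_sndE (A B : finType) (f : T -> A) (g : T -> B) a :
  \sum_b probOf p (fun t => (f t, g t)) (a, b) = probOf p f a.
Proof. by rewrite /probOf (partition_big g xpredT). Qed.

Lemma sum_probOf_fstE (A B : finType) (f : T -> A) (g : T -> B) b :
  \sum_a probOf p (fun t => (f t, g t)) (a, b) = probOf p g b.
Proof.
rewrite /probOf (partition_big f xpredT) //=; apply: eq_bigr => a _.
by apply: eq_bigl => t; rewrite xpair_eqE andbC.
Qed.

Lemma probOf_pair_le_fst (A B : finType) (f : T -> A) (g : T -> B) a b :
  probOf p (fun t => (f t, g t)) (a, b) <= probOf p f a.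
Proof.
rewrite -(sum_probOf_sndE f g) (bigD1 b) //= lerDl.
by apply: sumr_ge0 => *; exact: probOf_ge0.
Qed.

Lemma probOf_pair_le_snd (A B : finType) (f : T -> A) (g : T -> B) a b :
  probOf p (fun t => (f t, g t)) (a, b) <= probOf p g b.
Proof.
rewrite -(sum_probOf_fstE f g) (bigD1 a) //= lerDl.
by apply: sumr_ge0 => *; exact: probOf_ge0.
Qed.

Lemma mutinfo_entropyE (A B : finType) (f : T -> A) (g : T -> B) :
  mutinfo p f g = \sum_a \sum_b xlog2 (probOf p (fun t => (f t, g t)) (a, b))
                  - \sum_a xlog2 (probOf p f a) - \sum_b xlog2 (probOf p g b).
Proof.
pose pab a b := probOf p (fun t => (f t, g t)) (a, b).
have termE a b : (if pab a b == 0 then 0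
                  else pab a b * log2 (pab a b / (probOf p f a * probOf p g b))) =
    xlog2 (pab a b) - pab a b * log2 (probOf p f a) - pab a b * log2 (probOf p g b).
  have [->|nz] := eqVneq (pab a b) 0; first by rewrite xlog20 !mul0r !subr0.
  have pab_gt0 : 0 < pab a b by rewrite lt0r nz probOf_ge0.
  have pa_gt0 := lt_le_trans pab_gt0 (probOf_pair_le_fst f g a b).
  have pb_gt0 := lt_le_trans pab_gt0 (probOf_pair_le_snd f g a b).
  by rewrite /xlog2 /log2 ln_div ?lnM ?posrE ?mulr_gt0 //; ring.
rewrite /mutinfo; under eq_bigr => a _ do under eq_bigr => b _ do rewrite /= termE.
under eq_bigr => a _ do rewrite !sumrB; rewrite !sumrB; congr (_ - _ - _).
  by apply: eq_bigr => a _; rewrite -mulr_suml sum_probOf_sndE.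
by rewrite exchange_big; apply: eq_bigr => b _; rewrite -mulr_suml sum_probOf_fstE.
Qed.

Lemma mutinfo_uniform_bitE (B : finType) (f : T -> bool) (g : T -> B) :
  (forall a, probOf p f a = 2^-1) ->
  mutinfo p f g = \sum_b bitinfo (probOf p (fun t => (f t, g t)) (true, b))
                                 (probOf p (fun t => (f t, g t)) (false, b)).
Proof.
move=> f_unif; rewrite mutinfo_entropyE !big_bool /= !f_unif xlog2_half.
under [X in _ - X]eq_bigr => b _ do rewrite -(sum_probOf_fstE f) big_bool.
have := sum_probOf_sndE f g true; have := sum_probOf_sndE f g false.
by rewrite /bitinfo sumrB !big_split /= !f_unif; lra.
Qed.

End MutualInformation.

Lemma sum_pairE (R : realType) (I J : finType) (F : I * J -> R) :
  \sum_t F t = \sum_i \sum_j F (i, j).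
Proof. by rewrite pair_bigA; apply: eq_bigr => -[]. Qed.

Section Integers.
Variable R : realType.
Implicit Types x : R.

Lemma isIntP x : isInt x <-> x \is a Num.int.
Proof. by split=> [[z ->]|/intrP]. Qed.

Lemma is01_int x : is01 x -> x \is a Num.int.
Proof. by case=> ->; rewrite ?rpred0 ?rpred1. Qed.

Lemma is01M x y : is01 x -> is01 y -> is01 (x * y).
Proof.
by case=> ->; case=> ->; rewrite ?mul0r ?mulr0 ?mulr1; [left | left | left | right].
Qed.

Definition J_of_I (i : R * R * R) : R * R * R := (i.2 - i.1.2, i.2 - i.1.1, i.1.1 * i.1.2).

Definition I_of_J (j : R * R * R) : R * R * R :=
  let c1 := j.1.1 + (1 - j.1.1) * (1 - j.1.2) * j.2 in (c1, c1 + j.1.2 - j.1.1, c1 + j.1.2).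

End Integers.

Section TwoUserWeights.
Variables (R : realType) (Y : finType) (q : bool -> bool -> Y -> R).

(* For [q = macw W], i.e. q x1 x2 y = P(X1 = x1, X2 = x2, Y = y), these are
   I(X1; Y, X2), I(X2; Y, X1), I(X1; Y), I(X2; Y) and I(X1 + X2; Y). *)
Definition condinfo1 := \sum_(t : Y * bool) bitinfo (q true t.2 t.1) (q false t.2 t.1).
Definition condinfo2 := \sum_(t : Y * bool) bitinfo (q t.2 true t.1) (q t.2 false t.1).
Definition info1 :=
  \sum_y bitinfo (q true true y + q true false y) (q false true y + q false false y).
Definition info2 :=
  \sum_y bitinfo (q true true y + q false true y) (q true false y + q false false y).
Definition infoxor :=
  \sum_y bitinfo (q true false y + q false true y) (q true true y + q false false y).

Lemma condinfo1_info2_chain : condinfo1 + info2 = condinfo2 + info1.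
Proof.
rewrite /condinfo1 /condinfo2 !sum_pairE -!big_split /=; apply: eq_bigr => y _.
by rewrite !big_bool /= bitinfo_chain.
Qed.

Hypothesis q_ge0 : forall x1 x2 y, 0 <= q x1 x2 y.
Hypothesis q_mass : forall x1 x2, \sum_y q x1 x2 y = 4^-1.

Lemma condinfo1_mass : \sum_(t : Y * bool) (q true t.2 t.1 + q false t.2 t.1) = 1.
Proof.
rewrite sum_pairE; under eq_bigr => y _ do rewrite big_bool.
by rewrite !big_split /= !q_mass; field.
Qed.

Lemma condinfo2_mass : \sum_(t : Y * bool) (q t.2 true t.1 + q t.2 false t.1) = 1.
Proof.
rewrite sum_pairE; under eq_bigr => y _ do rewrite big_bool.
by rewrite !big_split /= !q_mass; field.
Qed.

Lemma info_mass (x1 x2 x3 x4 x1' x2' x3' x4' : bool) :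
  \sum_y (q x1 x1' y + q x2 x2' y + (q x3 x3' y + q x4 x4' y)) = 1.
Proof. by rewrite !big_split /= !q_mass; field. Qed.

Lemma condinfo1_eq0P :
  reflect (forall t : Y * bool, q true t.2 t.1 = q false t.2 t.1) (condinfo1 == 0).
Proof. by apply: sum_bitinfo_eq0P => t. Qed.

Lemma condinfo2_eq0P :
  reflect (forall t : Y * bool, q t.2 true t.1 = q t.2 false t.1) (condinfo2 == 0).
Proof. by apply: sum_bitinfo_eq0P => t. Qed.

Lemma condinfo1_eq1P :
  reflect (forall t : Y * bool, q true t.2 t.1 = 0 \/ q false t.2 t.1 = 0) (condinfo1 == 1).
Proof. by apply: sum_bitinfo_eq1P => [t|t|]; last exact: condinfo1_mass. Qed.

Lemma condinfo2_eq1P :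
  reflect (forall t : Y * bool, q t.2 true t.1 = 0 \/ q t.2 false t.1 = 0) (condinfo2 == 1).
Proof. by apply: sum_bitinfo_eq1P => [t|t|]; last exact: condinfo2_mass. Qed.

Lemma info1_eq0P : reflect
  (forall y, q true true y + q true false y = q false true y + q false false y) (info1 == 0).
Proof. by apply: sum_bitinfo_eq0P => y; exact: addr_ge0. Qed.

Lemma info2_eq0P : reflect
  (forall y, q true true y + q false true y = q true false y + q false false y) (info2 == 0).
Proof. by apply: sum_bitinfo_eq0P => y; exact: addr_ge0. Qed.

Lemma infoxor_eq0P : reflect
  (forall y, q true false y + q false true y = q true true y + q false false y) (infoxor == 0).
Proof. by apply: sum_bitinfo_eq0P => y; exact: addr_ge0. Qed.

Lemma info1_eq1P : reflect
  (forall y, q true true y + q true false y = 0 \/ q false true y + q false false y = 0)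
  (info1 == 1).
Proof. by apply: sum_bitinfo_eq1P => [y|y|]; rewrite ?info_mass ?addr_ge0. Qed.

Lemma info2_eq1P : reflect
  (forall y, q true true y + q false true y = 0 \/ q true false y + q false false y = 0)
  (info2 == 1).
Proof. by apply: sum_bitinfo_eq1P => [y|y|]; rewrite ?info_mass ?addr_ge0. Qed.

Lemma infoxor_eq1P : reflect
  (forall y, q true false y + q false true y = 0 \/ q true true y + q false false y = 0)
  (infoxor == 1).
Proof. by apply: sum_bitinfo_eq1P => [y|y|]; rewrite ?info_mass ?addr_ge0. Qed.

Lemma condinfo1_int01 : isInt condinfo1 -> is01 condinfo1.
Proof. by apply: sum_bitinfo_int01 => //; exact: condinfo1_mass. Qed.

Lemma condinfo2_int01 : isInt condinfo2 -> is01 condinfo2.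
Proof. by apply: sum_bitinfo_int01 => //; exact: condinfo2_mass. Qed.

Lemma info1_int01 : isInt info1 -> is01 info1.
Proof. by apply: sum_bitinfo_int01 => [y|y|]; rewrite ?info_mass ?addr_ge0. Qed.

Lemma info2_int01 : isInt info2 -> is01 info2.
Proof. by apply: sum_bitinfo_int01 => [y|y|]; rewrite ?info_mass ?addr_ge0. Qed.

Lemma infoxor_mul : is01 condinfo1 -> is01 condinfo2 -> infoxor = condinfo1 * condinfo2.
Proof.
move=> [e1|e1] e2.
  move/eqP/condinfo1_eq0P: (e1) => h1; rewrite e1 mul0r; apply/eqP/infoxor_eq0P => y.
  by move: (h1 (y, true)) (h1 (y, false)) => /=; lra.
rewrite e1 mul1r; move/eqP/condinfo1_eq1P: e1 => h1; case: e2 => e2; rewrite e2.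
  move/eqP/condinfo2_eq0P: e2 => h2; apply/eqP/infoxor_eq0P => y.
  by move: (h2 (y, true)) (h2 (y, false)) => /=; lra.
move/eqP/condinfo2_eq1P: e2 => h2; apply/eqP/infoxor_eq1P => y.
by move: (h1 (y, true)) (h1 (y, false)) (h2 (y, true)) (h2 (y, false)) => /=
  [?|?] [?|?] [?|?] [?|?]; first [left; lra | right; lra].
Qed.

Lemma condinfo1_eq1_of_info1 : info1 = 1 -> condinfo1 = 1.
Proof.
move/eqP/info1_eq1P => h; apply/eqP/condinfo1_eq1P => -[y x2] /=.
move: (q_ge0 true true y) (q_ge0 true false y) (q_ge0 false true y) (q_ge0 false false y).
by case: (h y) => ? *; [left | right]; case: x2; lra.
Qed.

Lemma condinfo1_eq0_of_info12 : info1 = 0 -> info2 = 1 -> condinfo1 = 0.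
Proof.
move/eqP/info1_eq0P => h1 /eqP/info2_eq1P h2; apply/eqP/condinfo1_eq0P => -[y x2] /=.
move: (h1 y) (q_ge0 true true y) (q_ge0 true false y).
move: (q_ge0 false true y) (q_ge0 false false y).
by case: (h2 y) => ? *; case: x2; lra.
Qed.

Lemma condinfo1_eq_infoxor : info1 = 0 -> info2 = 0 -> is01 infoxor ->
  condinfo1 = infoxor.
Proof.
move/eqP/info1_eq0P => h1 /eqP/info2_eq0P h2 [e3|e3]; rewrite e3; apply/eqP.
  move/eqP/infoxor_eq0P: e3 => h3; apply/condinfo1_eq0P => -[y x2] /=.
  by move: (h1 y) (h2 y) (h3 y); case: x2; lra.
move/eqP/infoxor_eq1P: e3 => h3; apply/condinfo1_eq1P => -[y x2] /=.
move: (h1 y) (h2 y) (q_ge0 true true y) (q_ge0 true false y).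
move: (q_ge0 false true y) (q_ge0 false false y).
by case: (h3 y) => ? *; case: x2; first [left; lra | right; lra].
Qed.

Lemma condinfo1_binaryE : is01 info1 -> is01 info2 -> is01 infoxor ->
  condinfo1 = info1 + (1 - info1) * (1 - info2) * infoxor.
Proof.
move=> [e1|e1] + e3; last by rewrite e1 condinfo1_eq1_of_info1 // => _; ring.
case=> e2; rewrite e1 e2.
  by rewrite (condinfo1_eq_infoxor e1 e2 e3); ring.
by rewrite (condinfo1_eq0_of_info12 e1 e2); ring.
Qed.

End TwoUserWeights.

Definition macw (R : realType) (Y : finType) (W : bool -> bool -> Y -> R) x1 x2 y :=
  macP W ((x1, x2), y).

Section MAC.
Variables (R : realType) (Y : finType) (W : bool -> bool -> Y -> R).
Hypothesis W_MAC : is_MAC W.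

Lemma macP_ge0 t : 0 <= macP W t.
Proof. by case: W_MAC => W_ge0 _; rewrite divr_ge0. Qed.

Lemma sum_macw x1 x2 : \sum_y macw W x1 x2 y = 4^-1.
Proof. by case: W_MAC => _ W_sum; rewrite -mulr_suml W_sum mul1r. Qed.

Lemma probOf_input_outputE (A : finType) (phi : bool * bool -> A) a y :
  probOf (macP W) (fun t => (phi t.1, t.2)) (a, y) = \sum_(x | phi x == a) macP W (x, y).
Proof.
rewrite /probOf (eq_bigl (fun t => (phi t.1 == a) && (t.2 == y))) //.
rewrite -(pair_big_dep (fun x => phi x == a) (fun _ (y' : Y) => y' == y)
                       (fun x y' => macP W (x, y'))) /=.
by apply: eq_bigr => x _; rewrite big_pred1_eq.
Qed.

Lemma probOf_inputE (A : finType) (phi : bool * bool -> A) a :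
  probOf (macP W) (fun t => phi t.1) a = \sum_(x | phi x == a) 4^-1.
Proof.
rewrite -(sum_probOf_sndE _ (fun t => phi t.1) (@rvY Y)).
under eq_bigr => y _ do rewrite probOf_input_outputE.
by rewrite exchange_big; apply: eq_bigr => x _; exact: sum_macw.
Qed.

Lemma probOf_X1 a : probOf (macP W) (@rvX1 Y) a = 2^-1.
Proof.
rewrite (probOf_inputE (fun x => x.1)) big_mkcond sum_pairE !big_bool.
by case: a => /=; field.
Qed.

Lemma probOf_X2 a : probOf (macP W) (@rvX2 Y) a = 2^-1.
Proof.
rewrite (probOf_inputE (fun x => x.2)) big_mkcond sum_pairE !big_bool.
by case: a => /=; field.
Qed.

Lemma probOf_xor a : probOf (macP W) (fun t => addb (rvX1 t) (rvX2 t)) a = 2^-1.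
Proof.
rewrite (probOf_inputE (fun x => addb x.1 x.2)) big_mkcond sum_pairE !big_bool.
by case: a => /=; field.
Qed.

Lemma macw_ge0 x1 x2 y : 0 <= macw W x1 x2 y.
Proof. exact: macP_ge0. Qed.

Lemma mutinfo_X1_YX2 :
  mutinfo (macP W) (@rvX1 Y) (fun t => (rvY t, rvX2 t)) = condinfo1 (macw W).
Proof.
rewrite (mutinfo_uniform_bitE macP_ge0 _ probOf_X1); apply: eq_bigr => -[y x2] _.
by congr bitinfo; apply: (probOf_inj _ ((_, x2), y));
  rewrite /rvX1 /rvX2 /rvY => -[[? ?] ?] [[? ?] ?] [-> -> ->].
Qed.

Lemma mutinfo_X2_YX1 :
  mutinfo (macP W) (@rvX2 Y) (fun t => (rvY t, rvX1 t)) = condinfo2 (macw W).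
Proof.
rewrite (mutinfo_uniform_bitE macP_ge0 _ probOf_X2); apply: eq_bigr => -[y x1] _.
by congr bitinfo; apply: (probOf_inj _ ((x1, _), y));
  rewrite /rvX1 /rvX2 /rvY => -[[? ?] ?] [[? ?] ?] [-> -> ->].
Qed.

Lemma mutinfo_X1_Y : mutinfo (macP W) (@rvX1 Y) (@rvY Y) = info1 (macw W).
Proof.
rewrite (mutinfo_uniform_bitE macP_ge0 _ probOf_X1); apply: eq_bigr => y _.
by congr bitinfo; rewrite (probOf_input_outputE (fun x => x.1))
  big_mkcond sum_pairE !big_bool /= /macw; ring.
Qed.

Lemma mutinfo_X2_Y : mutinfo (macP W) (@rvX2 Y) (@rvY Y) = info2 (macw W).
Proof.
rewrite (mutinfo_uniform_bitE macP_ge0 _ probOf_X2); apply: eq_bigr => y _.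
by congr bitinfo; rewrite (probOf_input_outputE (fun x => x.2))
  big_mkcond sum_pairE !big_bool /= /macw; ring.
Qed.

Lemma mutinfo_xor_Y :
  mutinfo (macP W) (fun t => addb (rvX1 t) (rvX2 t)) (@rvY Y) = infoxor (macw W).
Proof.
rewrite (mutinfo_uniform_bitE macP_ge0 _ probOf_xor); apply: eq_bigr => y _.
by congr bitinfo; rewrite (probOf_input_outputE (fun x => addb x.1 x.2))
  big_mkcond sum_pairE !big_bool /= /macw; ring.
Qed.

Lemma mutinfo_X12_Y : mutinfo (macP W) (fun t => (rvX1 t, rvX2 t)) (@rvY Y) =
  condinfo1 (macw W) + info2 (macw W).
Proof.
have jointE x y : probOf (macP W) (fun t => (rvX1 t, rvX2 t, rvY t)) (x, y) = macw W x.1 x.2 y.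
  by rewrite (probOf_input_outputE (fun x => (x.1, x.2))) (big_pred1 x) // => -[].
have inputE x : probOf (macP W) (fun t => (rvX1 t, rvX2 t)) x = 4^-1.
  by rewrite (probOf_inputE (fun x => (x.1, x.2))) (big_pred1 x) // => -[].
have outputE y : probOf (macP W) (@rvY Y) y = \sum_x macw W x.1 x.2 y.
  by rewrite -(sum_probOf_fstE _ (fun t => (rvX1 t, rvX2 t))); apply: eq_bigr => x _.
have entropy_inputE : \sum_(x : bool * bool) xlog2 4^-1 =
    - \sum_y 2 * (macw W true true y + macw W true false y
                  + (macw W false true y + macw W false false y)).
  rewrite -mulr_sumr (info_mass sum_macw) sum_pairE !big_bool /= xlog2_quarter.
  by field.
rewrite (mutinfo_entropyE macP_ge0).
under eq_bigr => x _ do under eq_bigr => y _ do rewrite jointE.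
under [X in _ - X - _]eq_bigr => x _ do rewrite inputE.
under [X in _ - X]eq_bigr => y _ do rewrite outputE sum_pairE !big_bool.
rewrite entropy_inputE exchange_big /condinfo1 /info2 [in RHS]sum_pairE.
rewrite opprK -!big_split -sumrB; apply: eq_bigr => y _.
rewrite sum_pairE !big_bool /= /bitinfo.
by rewrite (addrACA (macw W true true y) (macw W false true y)); ring.
Qed.

Lemma Itriple_macE :
  Itriple W = (condinfo1 (macw W), condinfo2 (macw W), condinfo1 (macw W) + info2 (macw W)).
Proof. by rewrite /Itriple mutinfo_X1_YX2 mutinfo_X2_YX1 mutinfo_X12_Y. Qed.

Lemma Jtriple_macE : Jtriple W = (info1 (macw W), info2 (macw W), infoxor (macw W)).
Proof. by rewrite /Jtriple mutinfo_X1_Y mutinfo_X2_Y mutinfo_xor_Y. Qed.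

Lemma Jtriple_of_integral_Itriple : triple_all (@isInt R) (Itriple W) ->
  triple_all (@is01 R) (Jtriple W) /\ Jtriple W = J_of_I (Itriple W).
Proof.
rewrite Itriple_macE Jtriple_macE /triple_all /= => -[I1 I2 I3].
have chain := condinfo1_info2_chain (macw W).
have e1 := condinfo1_int01 macw_ge0 sum_macw I1.
have e2 := condinfo2_int01 macw_ge0 sum_macw I2.
have j1E : info1 (macw W) = condinfo1 (macw W) + info2 (macw W) - condinfo2 (macw W).
  by rewrite chain; ring.
have j2E : info2 (macw W) = condinfo1 (macw W) + info2 (macw W) - condinfo1 (macw W).
  by ring.
have j3E := infoxor_mul macw_ge0 sum_macw e1 e2.
split; last by rewrite /J_of_I /= -j1E -j2E j3E.
split.
- by apply: info1_int01 macw_ge0 sum_macw _; rewrite j1E isIntP rpredB // -isIntP.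
- by apply: info2_int01 macw_ge0 sum_macw _; rewrite j2E isIntP rpredB // -isIntP.
- by rewrite j3E; exact: is01M.
Qed.

Lemma Itriple_of_binary_Jtriple : triple_all (@is01 R) (Jtriple W) ->
  triple_all (@isInt R) (Itriple W) /\ Itriple W = I_of_J (Jtriple W).
Proof.
rewrite Itriple_macE Jtriple_macE /triple_all /= => -[J1 J2 J3].
have c1E := condinfo1_binaryE macw_ge0 sum_macw J1 J2 J3.
have c2E : condinfo2 (macw W) = condinfo1 (macw W) + info2 (macw W) - info1 (macw W).
  by rewrite (condinfo1_info2_chain (macw W)); ring.
have j1_int := is01_int J1; have j2_int := is01_int J2; have j3_int := is01_int J3.
have c1_int : condinfo1 (macw W) \is a Num.int.
  by rewrite c1E rpredD ?rpredM ?rpredB ?rpred1.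
split; last by rewrite /I_of_J /= -c1E -c2E.
by split; apply/isIntP; rewrite ?c2E ?rpredB ?rpredD.
Qed.

End MAC.

Theorem mainTheorem4 (R : realType) :
  (* integer I  ==>  J in {0,1}^3 *)
  (forall (Y : finType) (W : bool -> bool -> Y -> R),
     is_MAC W -> triple_all (@isInt R) (Itriple W) ->
     triple_all (@is01 R) (Jtriple W)) /\
  (* integer I determines J *)
  (forall (Y1 Y2 : finType) (W1 : bool -> bool -> Y1 -> R)
          (W2 : bool -> bool -> Y2 -> R),
     is_MAC W1 -> is_MAC W2 -> triple_all (@isInt R) (Itriple W1) ->
     Itriple W1 = Itriple W2 -> Jtriple W1 = Jtriple W2) /\
  (* J in {0,1}^3  ==>  integer I *)
  (forall (Y : finType) (W : bool -> bool -> Y -> R),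
     is_MAC W -> triple_all (@is01 R) (Jtriple W) ->
     triple_all (@isInt R) (Itriple W)) /\
  (* J in {0,1}^3 determines I *)
  (forall (Y1 Y2 : finType) (W1 : bool -> bool -> Y1 -> R)
          (W2 : bool -> bool -> Y2 -> R),
     is_MAC W1 -> is_MAC W2 -> triple_all (@is01 R) (Jtriple W1) ->
     Jtriple W1 = Jtriple W2 -> Itriple W1 = Itriple W2).
Proof.
split; [|split; [|split]].
- by move=> Y W W_MAC /(Jtriple_of_integral_Itriple W_MAC) [].
- move=> Y1 Y2 W1 W2 W1_MAC W2_MAC I1_int I12.
  have [_ ->] := Jtriple_of_integral_Itriple W1_MAC I1_int.
  rewrite I12 in I1_int *.
  by have [_ ->] := Jtriple_of_integral_Itriple W2_MAC I1_int.
- by move=> Y W W_MAC /(Itriple_of_binary_Jtriple W_MAC) [].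
- move=> Y1 Y2 W1 W2 W1_MAC W2_MAC J1_01 J12.
  have [_ ->] := Itriple_of_binary_Jtriple W1_MAC J1_01.
  rewrite J12 in J1_01 *.
  by have [_ ->] := Itriple_of_binary_Jtriple W2_MAC J1_01.
Qed.
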